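(* Let $\mathcal{G}$ be the affine plane of order $3$, let $R$ be a commutative ring with $2=0$, let $A=M_R(\mathcal{G},1)$ and $A'=A/\operatorname{Ann}(A)$ (an $8$-dimensional algebra). For each of the $12$ lines $\ell$ of $\mathcal{G}$, let $A'^\ell_0$ and $A'^\ell_1$ be the eigenspaces of $\operatorname{ad}_\ell$ on $A'$ for the eigenvalues $0$ and $1$. Then for each line $\ell$, $A'=A'^\ell_0\oplus A'^\ell_1$ and \[ A'^\ell_0A'^\ell_0\subseteq A'^\ell_0,\quad A'^\ell_0A'^\ell_1\subseteq A'^\ell_1,\quad A'^\ell_1A'^\ell_1\subseteq A'^\ell_0, \] i.e. $A'$ is a decomposition algebra with fusion law $0*0=\{0\}$, $0*1=1*0=\{1\}$, $1*1=\{0\}$.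
   Context: The affine plane of order $3$ is the partial linear space of the $9$ points and $12$ lines of the affine plane over $\mathbb{F}_3$ (the Fischer space of $3^2:2$); for distinct points $p,q$ (all distinct pairs are collinear, written $p\sim q$), $p\wedge q$ is the third point of their line. The nilpotent Matsuo algebra $A=M_R(\mathcal{G},1)$ is the free $R$-module with basis the points and commutative bilinear product $p\cdot q=0$ if $p=q$, and $p\cdot q=p+q+p\wedge q$ if $p\sim q$. $\operatorname{Ann}(A)=\{v\in A: vw=0\ \forall w\in A\}$ and $A'=A/\operatorname{Ann}(A)$ with induced product. For a line $\ell$ we also write $\ell$ for the sum of its three points, and $\operatorname{ad}_\ell(v)=\ell v$ (also on $A'$); the eigenspace for $\lambda$ is $\{v:\ell v=\lambda v\}$. *)

From HB Require Import structures.
From mathcomp Require Import all_boot all_order all_algebra.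
Set Implicit Arguments. Unset Strict Implicit. Unset Printing Implicit Defensive.
Import GRing.Theory.
Local Open Scope ring_scope.

Definition pt : finType := ('I_3 * 'I_3)%type.

(* Third point of the line through p, q (p <> q): in F_3^2, p + q + r = 0. *)
Definition third (a b : 'I_3) : 'I_3 := inord ((6 - a - b) %% 3).
Definition wedge (p q : pt) : pt := (third p.1 q.1, third p.2 q.2).

Definition is_line (L : {set pt}) : Prop :=
  exists p q : pt, p != q /\ L = [set p; q; wedge p q].

Notation alg R := {ffun pt -> R^o}.

Definition ev (R : comPzRingType) (p : pt) : alg R :=
  [ffun q => (q == p)%:R].

Definition pmul (R : comPzRingType) (p q : pt) : alg R :=
  if p == q then 0 else ev R p + ev R q + ev R (wedge p q).

Definition amul (R : comPzRingType) (x y : alg R) : alg R :=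
  \sum_(p : pt) \sum_(q : pt) (x p * y q) *: pmul R p q.

Definition inAnn (R : comPzRingType) (v : alg R) : Prop :=
  forall w : alg R, amul v w = 0.

Definition lineA (R : comPzRingType) (L : {set pt}) : alg R :=
  \sum_(p in L) ev R p.

(* v (a representative of its class in A' = A/Ann(A)) lies in the
   lambda-eigenspace of ad_L on A', i.e. L v - lambda v = 0 in A'. *)
Definition eigA' (R : comPzRingType) (lam : R) (L : {set pt}) (v : alg R) : Prop :=
  inAnn (amul (lineA R L) v - lam *: v).

From mathcomp Require Import all_boot all_order all_algebra.
Set Implicit Arguments.
Unset Strict Implicit.
Unset Printing Implicit Defensive.

Import GRing.Theory.
Local Open Scope ring_scope.

(* All structure constants of A are 0 or 1, so when 2 = 0 in R every identity
   between products of basis vectors can be computed over F_2 and lifted to R.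
   In characteristic 2 the eigenvalue-1 condition reads l v = v modulo Ann(A),
   so once ad_l is idempotent modulo Ann(A), the maps 1 + ad_l and ad_l are
   complementary projections of A' onto A'_0 and A'_1, and every eigenvector
   agrees modulo Ann(A) with its projection.  The fusion law then reduces to
   three bilinear identities between images of these projections.  Those and
   the idempotence are checked on basis vectors over F_2 for each of the 12
   lines, where the only correction term needed is a multiple of the sum of all
   points, which annihilates A. *)

Section MatsuoAlgebra.
Variable R : comPzRingType.
Implicit Types (u v w x y : alg R) (p q : pt).

Lemma regular_scaleE (a b : R) : a *: (b : R^o) = a * b.
Proof. by []. Qed.

Lemma thirdC (a b : 'I_3) : third a b = third b a.
Proof. by rewrite /third subnAC. Qed.

Lemma pmulC p q : pmul R p q = pmul R q p.
Proof.
rewrite /pmul eq_sym; case: eqP => // _.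
by rewrite /wedge thirdC [third p.2 _]thirdC [ev R q + _]addrC.
Qed.

Lemma amulC x y : amul x y = amul y x.
Proof.
rewrite /amul exchange_big; apply: eq_bigr => p _; apply: eq_bigr => q _.
by rewrite mulrC pmulC.
Qed.

Lemma amulZDr x k u v : amul x (k *: u + v) = k *: amul x u + amul x v.
Proof.
rewrite /amul scaler_sumr -big_split; apply: eq_bigr => p _.
rewrite scaler_sumr -big_split; apply: eq_bigr => q _.
by rewrite !ffunE /= scalerA -scalerDl mulrDr mulrCA.
Qed.

Lemma amulZDl y k u v : amul (k *: u + v) y = k *: amul u y + amul v y.
Proof. by rewrite ![amul _ y]amulC amulZDr. Qed.

Lemma amulDl u v y : amul (u + v) y = amul u y + amul v y.
Proof. by rewrite -[u]scale1r amulZDl !scale1r. Qed.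

Lemma amulDr x u v : amul x (u + v) = amul x u + amul x v.
Proof. by rewrite -[u]scale1r amulZDr !scale1r. Qed.

Lemma inAnn0 : inAnn (0 : alg R).
Proof.
move=> w; rewrite /amul big1 // => p _; rewrite big1 // => q _.
by rewrite ffunE mul0r scale0r.
Qed.

Lemma inAnnZD k u v : inAnn u -> inAnn v -> inAnn (k *: u + v).
Proof. by move=> Au Av w; rewrite amulZDl Au Av scaler0 addr0. Qed.

Lemma inAnnD u v : inAnn u -> inAnn v -> inAnn (u + v).
Proof. by move=> Au Av; rewrite -[u]scale1r; apply: inAnnZD. Qed.

Lemma alg_expand v : v = \sum_p (v p : R) *: ev R p.
Proof.
apply/ffunP => r; rewrite sum_ffunE (bigD1 r) //= big1 => [|p /negPf neq_pr].
  by rewrite addr0 !ffunE eqxx regular_scaleE mulr1.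
by rewrite !ffunE eq_sym neq_pr regular_scaleE mulr0.
Qed.

Lemma inAnn_linear (f : alg R -> alg R) :
  linear f -> (forall p, inAnn (f (ev R p))) -> forall v, inAnn (f v).
Proof.
move=> lin_f Af v; rewrite (alg_expand v); elim/big_rec: _ => [|p y _ Ay].
  have f0 := lin_f 1 0 0; rewrite scaler0 addr0 scale1r in f0.
  have -> : f 0 = 0 by apply: (@addrI _ (f 0)); rewrite -f0 addr0.
  exact: inAnn0.
by rewrite lin_f; apply: inAnnZD.
Qed.

Lemma inAnn_bilinear (B : alg R -> alg R -> alg R) :
  (forall x, linear (B x)) -> (forall y, linear (B^~ y)) ->
  (forall p q, inAnn (B (ev R p) (ev R q))) -> forall u v, inAnn (B u v).
Proof.
move=> linBr linBl Abasis u v.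
apply: (@inAnn_linear (B^~ v) (linBl v)) => p.
exact: (@inAnn_linear (B _) (linBr _) (Abasis p)).
Qed.

End MatsuoAlgebra.

Section CharTwo.
Variable R : comPzRingType.
Hypothesis char2 : 2%:R = 0 :> R.

Lemma addvv_char2 (V : lmodType R) (v : V) : v + v = 0.
Proof. by rewrite -mulr2n -scaler_nat char2 scale0r. Qed.

Lemma oppv_char2 (V : lmodType R) (v : V) : - v = v.
Proof. by apply/esym/eqP; rewrite -addr_eq0 addvv_char2. Qed.

Lemma natr_addb (a b : bool) : (a (+) b)%:R = a%:R + b%:R :> R.
Proof. by case: a; case: b; rewrite ?addr0 ?add0r // -char2. Qed.

End CharTwo.

(* [enum] and [inord] are stuck on the opaque [idP] under [vm_compute], hence
   the explicit points and the evaluable variant [cwedge] of [wedge]. *)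
Definition ords : seq 'I_3 :=
  [:: Ordinal (isT : (0 < 3)%N); Ordinal (isT : (1 < 3)%N); Ordinal (isT : (2 < 3)%N)].
Definition pts : seq pt := [seq (i, j) | i <- ords, j <- ords].

Lemma mem_pts (p : pt) : p \in pts.
Proof. by case: p => -[[|[|[|i]]] ?] -[[|[|[|j]]] ?]. Qed.

Lemma uniq_pts : uniq pts.
Proof. by []. Qed.

Lemma big_pts (V : nmodType) (F : pt -> V) : \sum_p F p = \sum_(p <- pts) F p.
Proof. by rewrite [RHS]big_uniq ?uniq_pts //; apply: eq_bigl => p; rewrite mem_pts. Qed.

Definition cthird (a b : 'I_3) : 'I_3 := Ordinal (ltn_pmod (6 - a - b) (isT : (0 < 3)%N)).
Definition cwedge (p q : pt) : pt := (cthird p.1 q.1, cthird p.2 q.2).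

Lemma cwedgeE p q : cwedge p q = wedge p q.
Proof. by congr pair; apply: val_inj; rewrite /= inordK ?ltn_pmod. Qed.

(* Vectors of the Matsuo algebra over F_2, as coordinate lists along [pts]. *)
Definition f2vec := seq bool.
Definition f2coord (s : f2vec) (p : pt) : bool := nth false s (index p pts).

Lemma f2coord_map (f : pt -> bool) p : f2coord [seq f q | q <- pts] p = f p.
Proof. by rewrite /f2coord (nth_map p) ?nth_index ?index_mem ?mem_pts. Qed.

Definition f2pmul (p q r : pt) : bool :=
  (p != q) && ((r == p) (+) (r == q) (+) (r == cwedge p q)).
Definition pt_pairs : seq (pt * pt) := [seq (p, q) | p <- pts, q <- pts].

(* Coordinate [r] of a product only involves the pairs (p, q) whose product
   has [r] in its support; tabulating their indices once keeps [f2mul] cheap. *)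
Definition f2mul_support : seq (seq (nat * nat)) :=
  [seq [seq (index pq.1 pts, index pq.2 pts) | pq <- pt_pairs & f2pmul pq.1 pq.2 r]
  | r <- pts].

Definition xorl : seq bool -> bool := foldr addb false.

Definition f2mul (s t : f2vec) : f2vec :=
  [seq xorl [seq nth false s ij.1 && nth false t ij.2 | ij <- sup]
  | sup <- f2mul_support].
Definition f2add (s t : f2vec) : f2vec :=
  [seq f2coord s p (+) f2coord t p | p <- pts].
Definition f2ev (p : pt) : f2vec := [seq q == p | q <- pts].
Definition f2line (a b : pt) : f2vec :=
  [seq [|| r == a, r == b | r == cwedge a b] | r <- pts].

(* Only multiples of the all-ones vector are recognised: they lie in Ann(A). *)
Definition f2ann (s : f2vec) : bool := (s == nseq 9 false) || (s == nseq 9 true).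

Lemma f2coord_mul s t r :
  f2coord (f2mul s t) r =
  xorl [seq f2coord s pq.1 && f2coord t pq.2 | pq <- pt_pairs & f2pmul pq.1 pq.2 r].
Proof. by rewrite /f2mul /f2mul_support -map_comp f2coord_map -map_comp. Qed.

Definition f2lines : seq f2vec :=
  undup [seq f2line pq.1 pq.2 | pq <- pt_pairs & pq.1 != pq.2].

Definition fusion_check (l : f2vec) : bool :=
  let E := f2mul l in
  all (fun a => let ea := E (f2ev a) in let pa := f2add (f2ev a) ea in
    f2ann (f2add (E ea) ea) &&
    all (fun b => let eb := E (f2ev b) in let pb := f2add (f2ev b) eb in
      let x := f2mul pa eb in
      [&& f2ann (E (f2mul pa pb)), f2ann (f2add (E x) x) & f2ann (E (f2mul ea eb))])
    pts) pts.

Lemma fusion_check_lines : all fusion_check f2lines.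
Proof. by vm_compute. Qed.

Lemma f2mul_ones_ev p : f2mul (nseq 9 true) (f2ev p) = nseq 9 false.
Proof.
have /allP/(_ p (mem_pts p))/eqP// :
  all (fun q => f2mul (nseq 9 true) (f2ev q) == nseq 9 false) pts.
by vm_compute.
Qed.

Lemma fusion_check_line a b : a != b -> fusion_check (f2line a b).
Proof.
move=> neq_ab; apply: (allP fusion_check_lines); rewrite mem_undup.
apply/mapP; exists (a, b) => //.
by rewrite mem_filter neq_ab; apply: allpairs_f; apply: mem_pts.
Qed.

Section Lift.
Variable R : comPzRingType.
Hypothesis char2 : 2%:R = 0 :> R.

Definition lift (s : f2vec) : alg R := [ffun p => (f2coord s p)%:R].

Lemma natr_xorl (s : seq bool) : (xorl s)%:R = \sum_(b <- s) b%:R :> R.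
Proof.
elim: s => [|b s IHs]; first by rewrite big_nil.
by rewrite big_cons /= (natr_addb char2) IHs.
Qed.

Lemma ev_lift p : ev R p = lift (f2ev p).
Proof. by apply/ffunP => r; rewrite !ffunE f2coord_map. Qed.

Lemma lineA_coord (L : {set pt}) r : lineA R L r = (r \in L)%:R.
Proof.
rewrite sum_ffunE big_mkcond (bigD1 r) //= ffunE eqxx big1 => [|p /negPf neq_pr].
  by case: (r \in L); rewrite addr0.
by rewrite ffunE eq_sym neq_pr if_same.
Qed.

Lemma lineA_lift a b : lineA R [set a; b; wedge a b] = lift (f2line a b).
Proof. by apply/ffunP => r; rewrite lineA_coord ffunE f2coord_map cwedgeE !inE orbA. Qed.

Lemma pmul_coord p q r : pmul R p q r = (f2pmul p q r)%:R.
Proof.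
rewrite /pmul /f2pmul cwedgeE; case: eqP => [->|_]; first by rewrite ffunE.
by rewrite !ffunE !(natr_addb char2).
Qed.

Lemma add_lift s t : lift s + lift t = lift (f2add s t).
Proof. by apply/ffunP => r; rewrite !ffunE f2coord_map (natr_addb char2). Qed.

Lemma amul_lift s t : amul (lift s) (lift t) = lift (f2mul s t).
Proof.
apply/ffunP => r; rewrite [RHS]ffunE f2coord_mul natr_xorl big_map big_filter.
rewrite big_mkcond /pt_pairs big_allpairs /amul sum_ffunE big_pts.
apply: eq_bigr => p _; rewrite sum_ffunE big_pts; apply: eq_bigr => q _.
rewrite !ffunE regular_scaleE pmul_coord -!natrM !mulnb.
by case: f2pmul; rewrite ?andbT ?andbF.
Qed.

Lemma lift_zero : lift (nseq 9 false) = 0.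
Proof. by apply/ffunP => r; rewrite !ffunE /f2coord nth_nseq if_same. Qed.

Lemma inAnn_lift_ones : inAnn (lift (nseq 9 true)).
Proof.
move=> w; rewrite (alg_expand w); elim/big_rec: _ => [|p y _ IHy].
  by rewrite amulC; apply: inAnn0.
by rewrite amulZDr IHy ev_lift amul_lift f2mul_ones_ev lift_zero scaler0 addr0.
Qed.

Lemma inAnn_lift s : f2ann s -> inAnn (lift s).
Proof.
case/orP=> /eqP ->; last exact: inAnn_lift_ones.
by rewrite lift_zero; apply: inAnn0.
Qed.

End Lift.

Section FusionLaw.
Variable R : comPzRingType.
Hypothesis char2 : 2%:R = 0 :> R.
Variable L : {set pt}.
Implicit Types u v w : alg R.
Local Notation E := (amul (lineA R L)).

Lemma eigA'0E v : eigA' 0 L v = inAnn (E v).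
Proof. by rewrite /eigA' scale0r subr0. Qed.

Lemma eigA'1E v : eigA' 1 L v = inAnn (E v + v).
Proof. by rewrite /eigA' scale1r (oppv_char2 char2). Qed.

Lemma eigA'0_amul u w : eigA' 0 L u -> amul u w = amul (u + E u) w.
Proof. by rewrite eigA'0E => Au; rewrite amulDl Au addr0. Qed.

Lemma eigA'1_amul u w : eigA' 1 L u -> amul u w = amul (E u) w.
Proof.
rewrite eigA'1E => Au.
have u_split : u = E u + (E u + u) by rewrite addrA (addvv_char2 char2) add0r.
by rewrite {1}u_split amulDl Au addr0.
Qed.

Lemma eigA'_trivial_intersection v : eigA' 0 L v -> eigA' 1 L v -> inAnn v.
Proof.
rewrite eigA'0E eigA'1E => A0 A1.
have -> : v = E v + (E v + v) by rewrite addrA (addvv_char2 char2) add0r.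
exact: inAnnD.
Qed.

Hypothesis E_idem : forall v, eigA' 1 L (E v).
Hypothesis fusion00 : forall u v, eigA' 0 L (amul (u + E u) (v + E v)).
Hypothesis fusion01 : forall u v, eigA' 1 L (amul (u + E u) (E v)).
Hypothesis fusion11 : forall u v, eigA' 0 L (amul (E u) (E v)).

Lemma eigA'0_proj v : eigA' 0 L (v + E v).
Proof. by rewrite eigA'0E amulDr addrC -eigA'1E. Qed.

Lemma eigA'_decomposition v :
  exists v0 v1, [/\ eigA' 0 L v0, eigA' 1 L v1 & inAnn (v - v0 - v1)].
Proof.
exists (v + E v), (E v); split; [exact: eigA'0_proj | exact: E_idem |].
rewrite !(oppv_char2 char2) addrA (addvv_char2 char2) add0r (addvv_char2 char2).
exact: inAnn0.
Qed.

Lemma fusion_eigA'00 u w : eigA' 0 L u -> eigA' 0 L w -> eigA' 0 L (amul u w).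
Proof.
by move=> Au Aw; rewrite (eigA'0_amul _ Au) amulC (eigA'0_amul _ Aw).
Qed.

Lemma fusion_eigA'01 u w : eigA' 0 L u -> eigA' 1 L w -> eigA' 1 L (amul u w).
Proof.
by move=> Au Aw; rewrite (eigA'0_amul _ Au) amulC (eigA'1_amul _ Aw) amulC.
Qed.

Lemma fusion_eigA'10 u w : eigA' 1 L u -> eigA' 0 L w -> eigA' 1 L (amul u w).
Proof. by move=> Au Aw; rewrite amulC; apply: fusion_eigA'01. Qed.

Lemma fusion_eigA'11 u w : eigA' 1 L u -> eigA' 1 L w -> eigA' 0 L (amul u w).
Proof.
by move=> Au Aw; rewrite (eigA'1_amul _ Au) amulC (eigA'1_amul _ Aw) amulC.
Qed.

End FusionLaw.

Section LineIdentities.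
Variable R : comPzRingType.
Hypothesis char2 : 2%:R = 0 :> R.
Variables (L : {set pt}) (l : f2vec).
Hypothesis check_l : fusion_check l.
Hypothesis lineA_l : lineA R L = lift R l.
Implicit Types u v : alg R.
Local Notation E := (amul (lineA R L)).

Lemma fusion_check_basis a b :
  let ea := f2mul l (f2ev a) in let pa := f2add (f2ev a) ea in
  let eb := f2mul l (f2ev b) in let pb := f2add (f2ev b) eb in
  [/\ f2ann (f2add (f2mul l ea) ea), f2ann (f2mul l (f2mul pa pb)),
      f2ann (f2add (f2mul l (f2mul pa eb)) (f2mul pa eb)) &
      f2ann (f2mul l (f2mul ea eb))].
Proof.
have /allP/(_ a (mem_pts a))/andP[idem /allP/(_ b (mem_pts b))] := check_l.
by case/and3P.
Qed.

Lemma E_lift s : E (lift R s) = lift R (f2mul l s).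
Proof. by rewrite lineA_l (amul_lift char2). Qed.

Lemma line_idempotent v : eigA' 1 L (E v).
Proof.
rewrite (eigA'1E char2); move: v; apply: (@inAnn_linear _ (fun v => E (E v) + E v)).
  by move=> k x y; rewrite !amulZDr scalerDr addrACA.
move=> p; rewrite ev_lift !E_lift (add_lift char2); apply: (inAnn_lift char2).
by case: (fusion_check_basis p p).
Qed.

Lemma line_fusion00 u v : eigA' 0 L (amul (u + E u) (v + E v)).
Proof.
rewrite eigA'0E; move: u v.
apply: (@inAnn_bilinear _ (fun x y => E (amul (x + E x) (y + E y)))).
- by move=> x k y z; rewrite amulZDr addrACA -scalerDr !amulZDr.
- by move=> y k x z; rewrite amulZDr addrACA -scalerDr amulZDl amulZDr.
move=> p q; rewrite !ev_lift !E_lift !(add_lift char2) !(amul_lift char2) E_lift.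
by apply: (inAnn_lift char2); case: (fusion_check_basis p q).
Qed.

Lemma line_fusion01 u v : eigA' 1 L (amul (u + E u) (E v)).
Proof.
rewrite (eigA'1E char2); move: u v.
apply: (@inAnn_bilinear _ (fun x y => E (amul (x + E x) (E y)) + amul (x + E x) (E y))).
- by move=> x k y z; rewrite !amulZDr scalerDr addrACA.
- by move=> y k x z; rewrite amulZDr addrACA -scalerDr amulZDl amulZDr scalerDr addrACA.
move=> p q; rewrite !ev_lift !E_lift !(add_lift char2) (amul_lift char2).
rewrite E_lift (add_lift char2).
by apply: (inAnn_lift char2); case: (fusion_check_basis p q).
Qed.

Lemma line_fusion11 u v : eigA' 0 L (amul (E u) (E v)).
Proof.
rewrite eigA'0E; move: u v.
apply: (@inAnn_bilinear _ (fun x y => E (amul (E x) (E y)))).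
- by move=> x k y z; rewrite !amulZDr.
- by move=> y k x z; rewrite amulZDr amulZDl amulZDr.
move=> p q; rewrite !ev_lift !E_lift (amul_lift char2) E_lift.
by apply: (inAnn_lift char2); case: (fusion_check_basis p q).
Qed.

End LineIdentities.

Theorem corollary5p18 (R : comPzRingType) (char2 : 2%:R = 0 :> R)
  (L : {set pt}) (hL : is_line L) :
  (* A' = A'_0 + A'_1 *)
  (forall v : alg R, exists v0 v1 : alg R,
      eigA' 0 L v0 /\ eigA' 1 L v1 /\ inAnn (v - v0 - v1)) /\
  (* the sum is direct: A'_0 /\ A'_1 = 0 in A' *)
  (forall v : alg R, eigA' 0 L v -> eigA' 1 L v -> inAnn v) /\
  (* fusion law *)
  (forall u w : alg R, eigA' 0 L u -> eigA' 0 L w -> eigA' 0 L (amul u w)) /\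
  (forall u w : alg R, eigA' 0 L u -> eigA' 1 L w -> eigA' 1 L (amul u w)) /\
  (forall u w : alg R, eigA' 1 L u -> eigA' 0 L w -> eigA' 1 L (amul u w)) /\
  (forall u w : alg R, eigA' 1 L u -> eigA' 1 L w -> eigA' 0 L (amul u w)).
Proof.
have [a [b [neq_ab ->]]] := hL.
have check_l := fusion_check_line neq_ab.
have lineA_l := lineA_lift R a b.
have idem := line_idempotent char2 check_l lineA_l.
have fus00 := line_fusion00 char2 check_l lineA_l.
have fus01 := line_fusion01 char2 check_l lineA_l.
have fus11 := line_fusion11 char2 check_l lineA_l.
split; [|split; [|split; [|split; [|split]]]].
- by move=> v; have [v0 [v1 []]] := eigA'_decomposition char2 idem v; exists v0, v1.
- move=> v A0 A1; exact: (eigA'_trivial_intersection char2 A0 A1).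
- move=> u w Au Aw; exact: (fusion_eigA'00 fus00 Au Aw).
- move=> u w Au Aw; exact: (fusion_eigA'01 char2 fus01 Au Aw).
- move=> u w Au Aw; exact: (fusion_eigA'10 char2 fus01 Au Aw).
- move=> u w Au Aw; exact: (fusion_eigA'11 char2 fus11 Au Aw).
Qed.
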